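(* Let $s$ be a positive integer and $r$ a nonnegative integer. Then \[ \sum_{D \in \mathcal{D}_{s,s}^{(r)}} q^{\mathrm{vmr}(D)} = q^{\binom{r+1}{2}}\begin{bmatrix}2s-1\\ s+r\end{bmatrix}_q. \]
   Context: A ballot path from $(0,0)$ to $(s+t,s-t)$ is a sequence of lattice points $v_0=(0,0),v_1,\ldots,v_{s+t}=(s+t,s-t)$ with each step $v_i-v_{i-1}\in\{(1,1),(1,-1)\}$ that never goes below the $x$-axis (for $s=t$ these are Dyck paths from $(0,0)$ to $(2s,0)$). A point $v_i$ ($0<i<s+t$) is a valley if $v_i-v_{i-1}=(1,-1)$ and $v_{i+1}-v_i=(1,1)$; a valley lying on the $x$-axis is a return. Each return may independently be marked or not; a marked path is a path together with a choice of which of its returns are marked. $\mathcal{D}_{s,t}^{(r)}$ is the set of marked ballot paths from $(0,0)$ to $(s+t,s-t)$ with at least $r$ marked returns. For such $D$, $\mathrm{maj}(D)$ is the sum of the $x$-coordinates of all valleys of $D$, and $\mathrm{vmr}(D)=\mathrm{maj}(D)-\frac12\sum x_i$, where the last sum runs over the $x$-coordinates $x_i$ of the marked returns of $D$. Notation: $(a;q)_n=(1-a)\cdots(1-aq^{n-1})$ and $\begin{bmatrix}n\\k\end{bmatrix}_q=\frac{(q;q)_n}{(q;q)_k(q;q)_{n-k}}$ for $n\ge k\ge0$, $0$ otherwise. *)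

From HB Require Import structures.
From mathcomp Require Import all_boot all_order all_algebra fraction.
Set Implicit Arguments. Unset Strict Implicit. Unset Printing Implicit Defensive.
Import Order.TTheory GRing.Theory Num.Theory.
Local Open Scope ring_scope.

(* A lattice path is encoded by its sequence of steps: true = (1,1), false = (1,-1).
   The point v_i is (i, height p i). *)
Definition height (p : seq bool) (i : nat) : int :=
  (count id (take i p))%:Z - (count negb (take i p))%:Z.

Definition ballot (s t : nat) (p : seq bool) : bool :=
  [&& size p == (s + t)%N, count id p == s &
      [forall i : 'I_(size p).+1, 0 <= height p i]].

Definition valley (p : seq bool) (i : nat) : bool :=
  [&& (0 < i)%N, (i < size p)%N, ~~ nth false p i.-1 & nth false p i].

Definition is_return (p : seq bool) (i : nat) : bool :=
  valley p i && (height p i == 0).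

Definition returns (n : nat) (p : n.-tuple bool) : {set 'I_n} :=
  [set i : 'I_n | is_return p i].

Definition maj (p : seq bool) : nat :=
  (\sum_(i < size p | valley p i) i)%N.

(* vmr(D) = maj(D) - (1/2) sum of x-coordinates of marked returns.  Returns lie on
   the x-axis, hence have even x-coordinate, so (1/2) x = x./2 exactly. *)
Definition vmr (n : nat) (p : n.-tuple bool) (M : {set 'I_n}) : int :=
  (maj p)%:Z - (\sum_(i in M) (nat_of_ord i)./2)%N%:Z.

(* q as the indeterminate in the field of rational functions Q(q) ~ Frac(Z[q]) *)
Definition qX : {fraction {poly int}} := tofrac 'X.

Definition qpoch (a : {fraction {poly int}}) (n : nat) : {fraction {poly int}} :=
  \prod_(i < n) (1 - a * qX ^+ i).

Definition qbinom (n k : nat) : {fraction {poly int}} :=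
  if (k <= n)%N then qpoch qX n / (qpoch qX k * qpoch qX (n - k)) else 0.

(* Let T(s,t,r) be the sum, over ballot paths p with s up and t down steps, of
   q^maj(p) times the sum, over the sets of at least r returns of p, of the product of
   q^(-x/2) over the returns x of the set; the theorem is the case s = t.
   Appending a down step leaves the weight unchanged.  Appending an up step changes it
   only after a down step, where it creates a valley at x = s + t; that valley is a return,
   and may be marked, exactly when s = t.  Splitting on the last step therefore gives a
   recursion in s and t, and one checks with the q-Pascal rules and the absorption
   identity that it is solved by
     T(s,t,r) = q^C(r+1,2) [s+t, s+r]_q    for t < s,
     T(s,s,r) = q^C(r+1,2) [2s-1, s+r]_q. *)

From HB Require Import structures.
From mathcomp Require Import all_boot all_order all_algebra fraction.
From mathcomp Require Import ring zify.
Import Order.TTheory GRing.Theory Num.Theory.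
Local Open Scope ring_scope.

Lemma qX_neq0 : qX != 0.
Proof. by rewrite tofrac_eq0 polyX_eq0. Qed.

Lemma subr1_qXS_neq0 n : 1 - qX ^+ n.+1 != 0.
Proof.
rewrite -tofracXn -tofrac1 -tofracB tofrac_eq0 -oppr_eq0 opprB.
by apply: monic_neq0; rewrite -[1]polyC1 monicXnsubC.
Qed.

Lemma qpochS n : qpoch qX n.+1 = qpoch qX n * (1 - qX ^+ n.+1).
Proof. by rewrite /qpoch big_ord_recr /= exprS. Qed.

Lemma qpoch_neq0 n : qpoch qX n != 0.
Proof.
elim: n => [|n IHn]; first by rewrite /qpoch big_ord0 oner_neq0.
by rewrite qpochS mulf_neq0 ?subr1_qXS_neq0.
Qed.

Lemma qbinom_qpoch a b : qbinom (a + b) a * (qpoch qX a * qpoch qX b) = qpoch qX (a + b).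
Proof. by rewrite /qbinom leq_addr addKn divfK // mulf_neq0 ?qpoch_neq0. Qed.

Lemma qbinom_small n k : (n < k)%N -> qbinom n k = 0.
Proof. by rewrite /qbinom ltnNge => /negbTE ->. Qed.

Lemma qbinom_addn n r : qbinom n (n + r) = (r == 0)%:R.
Proof.
case: r => [|r]; last by rewrite qbinom_small // addnS ltnS leq_addr.
by rewrite /qbinom addn0 leqnn subnn [qpoch _ 0]big_ord0 mulr1 divff ?qpoch_neq0.
Qed.

Lemma qbinom_sym n k : (k <= n)%N -> qbinom n k = qbinom n (n - k).
Proof. by move=> le_kn; rewrite /qbinom le_kn leq_subr subKn // (mulrC (qpoch qX k)). Qed.

Lemma mul_qbinom_diag n k : (1 - qX ^+ k.+1) * qbinom n.+1 k.+1 = (1 - qX ^+ n.+1) * qbinom n k.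
Proof.
case: (leqP k n) => [le_kn|lt_nk]; last by rewrite !qbinom_small ?mulr0.
rewrite -(subnKC le_kn); set b := (n - k)%N.
apply: (mulIf (mulf_neq0 (qpoch_neq0 k) (qpoch_neq0 b))).
rewrite -[RHS]mulrA qbinom_qpoch -addSn.
have -> : (1 - qX ^+ k.+1) * qbinom (k.+1 + b) k.+1 * (qpoch qX k * qpoch qX b) =
          qbinom (k.+1 + b) k.+1 * (qpoch qX k * (1 - qX ^+ k.+1) * qpoch qX b) by ring.
by rewrite -qpochS qbinom_qpoch addSn qpochS mulrC.
Qed.

Lemma mul_qbinom_down n k : (1 - qX ^+ (n.+1 - k)) * qbinom n.+1 k = (1 - qX ^+ n.+1) * qbinom n k.
Proof.
case: (ltngtP k n.+1) => [lt_kn|lt_nk|->]; last 2 first.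
- by rewrite !qbinom_small ?mulr0 // ltnW.
- by rewrite subnn subrr mul0r qbinom_small ?mulr0.
rewrite ltnS in lt_kn.
by rewrite qbinom_sym 1?ltnW // [qbinom n k]qbinom_sym // subSn // mul_qbinom_diag.
Qed.

Lemma qbinomS' n k : qbinom n.+1 k.+1 = qbinom n k + qX ^+ k.+1 * qbinom n k.+1.
Proof.
case: (leqP k n) => [le_kn|lt_nk]; last by rewrite !qbinom_small ?mulr0 ?addr0 // ltnW.
apply: (mulfI (subr1_qXS_neq0 n)).
rewrite mulrDr -mul_qbinom_diag (mulrCA _ (qX ^+ k.+1)) -mul_qbinom_down subSS.
have -> : qX ^+ n.+1 = qX ^+ k.+1 * qX ^+ (n - k) by rewrite -exprD addSn subnKC.
ring.
Qed.

Lemma qbinomS n k : qbinom n.+1 k.+1 = qbinom n k.+1 + qX ^+ (n - k) * qbinom n k.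
Proof.
case: (leqP k n) => [le_kn|lt_nk]; last by rewrite !qbinom_small ?mulr0 ?addr0 // ltnW.
apply: (mulfI (subr1_qXS_neq0 n)).
rewrite mulrDr -mul_qbinom_down (mulrCA _ (qX ^+ (n - k))) -mul_qbinom_diag subSS.
have -> : qX ^+ n.+1 = qX ^+ (n - k) * qX ^+ k.+1 by rewrite -exprD addnS subnK.
ring.
Qed.

Section SubsetSums.
Variable R : comPzRingType.

Fixpoint esym_geq (l : seq R) (r : nat) : R :=
  if l is x :: l' then esym_geq l' r + x * esym_geq l' r.-1 else (r == 0)%:R.

Lemma esym_geq_rcons l x r : esym_geq (rcons l x) r = esym_geq l r + x * esym_geq l r.-1.
Proof. by elim: l r => [|y l IHl] r //=; rewrite !IHl; ring. Qed.

Lemma sum_subsets_prod (T : finType) (w : T -> R) (l : seq T) (A : {set T}) r :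
  uniq l -> A =i l ->
  \sum_(M : {set T} | (M \subset A) && (r <= #|M|)%N) \prod_(i in M) w i = esym_geq (map w l) r.
Proof.
elim: l A r => [|x l IHl] A r /=.
  move=> _ A0; have -> : A = set0 by apply/setP => i; rewrite A0 inE.
  case: r => [|r].
    rewrite (eq_bigl (pred1 set0)) => [|M]; last by rewrite subset0 andbT.
    by rewrite big_pred1_eq big_set0.
  by rewrite big_pred0 // => M; rewrite subset0; case: eqP => // ->; rewrite cards0.
case/andP=> x_notin_l uniq_l Al.
have Ax : A :\ x =i l.
  by move=> i; rewrite !inE Al inE; case: eqVneq => [->|] //=; rewrite (negbTE x_notin_l).
rewrite (bigID (fun M : {set T} => x \in M)) /= addrC; congr (_ + _).
  by rewrite -(IHl _ r uniq_l Ax); apply: eq_bigl => M; rewrite subsetD1 andbAC.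
rewrite -(IHl _ r.-1 uniq_l Ax) mulr_sumr.
rewrite (reindex_onto (fun M => x |: M) (fun M => M :\ x)) => [|M /andP[_ xM]]; last exact: setD1K.
symmetry; apply: eq_big => [M | M /andP[sub_M_Ax _]]; last first.
  by rewrite big_setU1 //=; move: sub_M_Ax; rewrite subsetD1 => /andP[].
rewrite subUset sub1set Al inE eqxx setU11 andbT subsetD1.
case: (boolP (x \in M)) => [xM | xNM]; last first.
  by rewrite setU1K // eqxx cardsU1 xNM /= !andbT add1n; case: r.
have -> : ((x |: M) :\ x == M) = false.
  by apply/negbTE/eqP => /setP/(_ x); rewrite !inE eqxx xM.
by rewrite !andbF.
Qed.

End SubsetSums.

Arguments esym_geq {R}.

Lemma sum_tupleS (T : finType) (R : nmodType) n (F : seq T -> R) :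
  \sum_(q : n.+1.-tuple T) F q = \sum_(p : n.-tuple T) \sum_(x : T) F (rcons p x).
Proof.
rewrite pair_big /= (reindex (fun px : n.-tuple T * T => [tuple of rcons px.1 px.2])) //.
exists (fun q => ([tuple of belast (thead q) (behead q)], last (thead q) (behead q))).
  move=> [p x] _ /=; congr (_, _); last by case: p => [[|y p] ?]; rewrite /= ?last_rcons.
  by apply: val_inj; case: p => [[|y p] ?]; rewrite /= ?belast_rcons.
by move=> [[|y q] //= size_q] _; apply: val_inj; rewrite /= -lastI.
Qed.

Definition ends_down (p : seq bool) : bool := ~~ last true p.

Definition above_axis (p : seq bool) : bool :=
  all (fun i => 0 <= height p i) (iota 0 (size p).+1).

Lemma height_rcons p b i : (i <= size p)%N -> height (rcons p b) i = height p i.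
Proof. by move=> le_ip; rewrite /height -cats1 takel_cat. Qed.

Lemma height_size p : height p (size p) = (count id p)%:Z - (count negb p)%:Z.
Proof. by rewrite /height take_size. Qed.

Lemma above_axis_size p : above_axis p -> 0 <= height p (size p).
Proof. by move/allP; apply; rewrite mem_iota ltnSn. Qed.

Lemma above_axis_rcons p b :
  above_axis (rcons p b) = above_axis p && (0 <= height (rcons p b) (size p).+1).
Proof.
rewrite /above_axis size_rcons -addn1 iotaD all_cat add0n.
congr andb; last by rewrite /= andbT.
apply: eq_in_all => i; rewrite mem_iota ltnS => /andP[_ le_ip].
by rewrite height_rcons.
Qed.

Lemma ballotE s t p : ballot s t p = [&& count id p == s, count negb p == t & above_axis p].
Proof.
rewrite /ballot.
have -> : [forall i : 'I_(size p).+1, 0 <= height p i] = above_axis p.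
  apply/forallP/allP => [above i|above i]; last by apply: above; rewrite mem_iota ltn_ord.
  by rewrite mem_iota add0n => /andP[_ lt_i]; exact: (above (Ordinal lt_i)).
rewrite -(count_predC id p).
by case: (count id p =P s) => [<-|_]; rewrite ?eqn_add2l ?andbF.
Qed.

Lemma ballot_rcons_up s t p : ballot s.+1 t (rcons p true) = ballot s t p.
Proof.
rewrite !ballotE above_axis_rcons -[(size p).+1](size_rcons p true) height_size.
rewrite -!cats1 !count_cat /= !addn1 !addn0 eqSS.
case: (count id p =P s) => // c_s; case: (count negb p =P t) => //= c_t.
case: (boolP (above_axis p)) => //= /above_axis_size; rewrite height_size => ?.
by apply/idP; lia.
Qed.

Lemma ballot_rcons_down s t p : ballot s t.+1 (rcons p false) = (t < s)%N && ballot s t p.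
Proof.
rewrite !ballotE above_axis_rcons -[(size p).+1](size_rcons p false) height_size.
rewrite -!cats1 !count_cat /= !addn1 !addn0 eqSS.
case: (count id p =P s) => [->|] /=; last by rewrite andbF.
case: (count negb p =P t) => [->|] /=; last by rewrite andbF.
by rewrite andbC; congr andb; apply/idP/idP; lia.
Qed.

Lemma ballot_leq s t p : ballot s t p -> (t <= s)%N.
Proof.
rewrite ballotE => /and3P[/eqP c_s /eqP c_t /above_axis_size].
by rewrite height_size; lia.
Qed.

Lemma ends_down_rcons p b : ends_down (rcons p b) = ~~ b.
Proof. by rewrite /ends_down last_rcons. Qed.

Lemma valley_rcons p b i : (i < size p)%N -> valley (rcons p b) i = valley p i.
Proof.
move=> lt_ip; rewrite /valley size_rcons !nth_rcons lt_ip ltnS (ltnW lt_ip).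
by case: i lt_ip => [|i] //= /ltnW ->.
Qed.

Lemma valley_rcons_size p b : valley (rcons p b) (size p) = b && ends_down p.
Proof.
case/lastP: p => [|p x]; first by rewrite /valley /ends_down /= andbF.
rewrite ends_down_rcons /valley /= !nth_rcons !size_rcons !(ltnSn, ltnn, eqxx) /=.
by rewrite andbC.
Qed.

Lemma maj_rcons p b : maj (rcons p b) = (maj p + (if b && ends_down p then size p else 0))%N.
Proof.
rewrite /maj size_rcons big_mkcond big_ord_recr /= valley_rcons_size.
congr (_ + _)%N; rewrite [RHS]big_mkcond; apply: eq_bigr => i _.
by rewrite valley_rcons.
Qed.

Definition return_positions (p : seq bool) : seq nat := [seq i <- iota 0 (size p) | is_return p i].

Lemma return_positions_rcons p b :
  return_positions (rcons p b) =
  if [&& b, ends_down p & height p (size p) == 0] then rcons (return_positions p) (size p)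
  else return_positions p.
Proof.
rewrite /return_positions size_rcons -addn1 iotaD filter_cat /= add0n.
rewrite {2}/is_return valley_rcons_size height_rcons // -andbA.
rewrite (@eq_in_filter _ _ (is_return p)) => [|i]; first by case: ifP; rewrite ?cats1 ?cats0.
by rewrite mem_iota => /andP[_ lt_ip]; rewrite /is_return valley_rcons // height_rcons // ltnW.
Qed.

Definition return_weight (x : nat) : {fraction {poly int}} := (qX ^+ x./2)^-1.

Definition path_weight (r : nat) (p : seq bool) : {fraction {poly int}} :=
  qX ^+ maj p * esym_geq [seq return_weight i | i <- return_positions p] r.

Lemma path_weight_rcons_down r p : path_weight r (rcons p false) = path_weight r p.
Proof. by rewrite /path_weight maj_rcons return_positions_rcons addn0. Qed.

Lemma path_weight_rcons_up r p :
  path_weight r (rcons p true) =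
  if ends_down p then
    qX ^+ size p * (path_weight r p +
      (if height p (size p) == 0 then return_weight (size p) * path_weight r.-1 p else 0))
  else path_weight r p.
Proof.
rewrite /path_weight maj_rcons return_positions_rcons /=.
case: (ends_down p); last by rewrite addn0.
case: (height p (size p) == 0) => /=; last by rewrite addr0 exprD; ring.
by rewrite map_rcons esym_geq_rcons exprD; ring.
Qed.

Lemma qX_vmr n (p : n.-tuple bool) (M : {set 'I_n}) :
  qX ^ vmr p M = qX ^+ maj p * \prod_(i in M) return_weight i.
Proof.
rewrite /vmr expfzDr ?qX_neq0 // -exprnP -exprnN.
by rewrite -prodrXr -prodfV.
Qed.

Lemma sum_marked_returns n (p : n.-tuple bool) r :
  \sum_(M : {set 'I_n} | (M \subset returns p) && (r <= #|M|)%N) qX ^ vmr p M =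
  path_weight r p.
Proof.
under eq_bigr => M _ do rewrite qX_vmr.
rewrite -mulr_sumr (@sum_subsets_prod _ _ (fun i : 'I_n => return_weight i)
  [seq i : 'I_n <- enum 'I_n | is_return p i]); last 2 first.
- exact/filter_uniq/enum_uniq.
- by move=> i; rewrite /returns inE mem_filter mem_enum andbT.
rewrite /path_weight /return_positions size_tuple -val_enum_ord filter_map -map_comp.
by congr (_ * esym_geq _ r); apply: eq_map.
Qed.

Lemma qX_return_weight s : qX ^+ (s + s) * return_weight (s + s) = qX ^+ s.
Proof. by rewrite /return_weight addnn doubleK -addnn exprD mulfK ?expf_neq0 ?qX_neq0. Qed.

Lemma path_weight_rcons_up_ballot s t r p : ballot s t p ->
  path_weight r (rcons p true) =
  path_weight r p + (if ends_down p then (qX ^+ (s + t) - 1) * path_weight r p +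
                       (if s == t then qX ^+ s * path_weight r.-1 p else 0) else 0).
Proof.
rewrite ballotE => /and3P[/eqP c_s /eqP c_t _].
have size_p : size p = (s + t)%N by rewrite -(count_predC id p) c_s -c_t.
rewrite path_weight_rcons_up height_size c_s c_t subr_eq0 eqz_nat size_p.
case: (ends_down p); last by rewrite addr0.
case: eqVneq => [<- | _]; last by rewrite !addr0; ring.
by rewrite mulrDr mulrA qX_return_weight; ring.
Qed.

Definition ballot_sum n s t r : {fraction {poly int}} :=
  \sum_(p : n.-tuple bool | ballot s t p) path_weight r p.

Definition down_sum n s t r : {fraction {poly int}} :=
  \sum_(p : n.-tuple bool | ballot s t p && ends_down p) path_weight r p.

Lemma ballot_sum_nil r : ballot_sum 0 0 0 r = (r == 0)%:R.
Proof.
rewrite /ballot_sum (big_pred1 [tuple]) => [|p].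
  by rewrite /path_weight /maj big_ord0 mul1r.
by rewrite tuple0 [RHS]eqxx ballotE /above_axis /height.
Qed.

Lemma ballot_sum_gt n s t r : (s < t)%N -> ballot_sum n s t r = 0.
Proof.
move=> lt_st; rewrite /ballot_sum big_pred0 // => p.
by apply: contraTF lt_st => /ballot_leq; rewrite -leqNgt.
Qed.

Lemma down_sum0 n s r : down_sum n s 0 r = 0.
Proof.
rewrite /down_sum big_pred0 // => p; rewrite ballotE.
case/lastP: (tval p) => [|p' b]; first by rewrite andbF.
by rewrite ends_down_rcons -cats1 !count_cat; case: b; rewrite /= ?andbF // !addn0 addn1 /= andbF.
Qed.

Lemma down_sumS n s t r : down_sum n.+1 s t.+1 r = if (t < s)%N then ballot_sum n s t r else 0.
Proof.
rewrite /down_sum big_mkcond.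
rewrite (@sum_tupleS _ _ n
  (fun q => if ballot s t.+1 q && ends_down q then path_weight r q else 0)).
under eq_bigr => p _ do
  rewrite big_bool /= !ends_down_rcons ballot_rcons_down path_weight_rcons_down andbF andbT add0r.
by case: (t < s)%N; [rewrite -big_mkcond | rewrite big1].
Qed.

Lemma ballot_sumS n s t r :
  ballot_sum n.+1 s.+1 t r =
  ballot_sum n s t r + (qX ^+ (s + t) - 1) * down_sum n s t r +
  (if s == t then qX ^+ s * down_sum n s t r.-1 else 0) + down_sum n.+1 s.+1 t r.
Proof.
rewrite /ballot_sum (bigID (fun q : n.+1.-tuple bool => ends_down q)) /= addrC.
congr (_ + _).
rewrite big_mkcond (@sum_tupleS _ _ n
  (fun q => if ballot s.+1 t q && ~~ ends_down q then path_weight r q else 0)).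
under [LHS]eq_bigr => p _ do rewrite big_bool /= !ends_down_rcons ballot_rcons_up andbT andbF addr0.
rewrite -big_mkcond /=.
under eq_bigr => p st_p do rewrite (path_weight_rcons_up_ballot _ _ r _ st_p).
rewrite big_split /= -addrA; congr (_ + _).
rewrite -big_mkcondr /= /down_sum.
by case: (s == t); rewrite big_split /= -!mulr_sumr // big1_eq.
Qed.

Definition qtri r : {fraction {poly int}} := qX ^+ 'C(r.+1, 2).

Lemma qtriS r : qtri r.+1 = qX ^+ r.+1 * qtri r.
Proof. by rewrite /qtri binS bin1 exprD mulrC. Qed.

Lemma qbinom_ballot_step m j :
  qbinom m.+1 j + (qX ^+ m.+1 - 1) * qbinom m j + qbinom m.+1 j.+1 = qbinom m.+2 j.+1.
Proof.
rewrite [RHS]qbinomS.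
have -> : qX ^+ (m.+1 - j) * qbinom m.+1 j =
          qbinom m.+1 j - (1 - qX ^+ (m.+1 - j)) * qbinom m.+1 j by ring.
by rewrite mul_qbinom_down; ring.
Qed.

Lemma qbinom_return_step u r :
  qX ^+ (u + u).+2 * qtri r * qbinom (u + u).+1 (u + r).+1 +
  qX ^+ u.+1 * qtri r.-1 * qbinom (u + u).+1 (u + r.-1).+1 +
  qtri r * qbinom (u + u).+2 (u + r).+2 = qtri r * qbinom (u + u).+3 (u + r).+2.
Proof.
have q2u : qX ^+ (u + u).+2 = qX ^+ u.+1 * qX ^+ u.+1 by rewrite -exprD addnS addSn.
case: r => [|r]; rewrite /=.
  rewrite addn0 (qbinomS (u + u).+2 u.+1) (qbinomS' (u + u).+1 u).
  rewrite (@qbinom_sym _ u) ?leqW ?leq_addl //.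
  have -> : ((u + u).+1 - u = u.+1)%N by lia.
  have -> : ((u + u).+2 - u.+1 = u.+1)%N by lia.
  by rewrite /qtri /= q2u; ring.
rewrite qtriS !addnS (qbinomS (u + u).+2 (u + r).+2) (qbinomS' (u + u).+1 (u + r).+1).
case: (leqP r u) => [le_ru | lt_ur]; last by rewrite !qbinom_small ?(mulr0, addr0) //; lia.
have -> : ((u + u).+2 - (u + r).+2 = u - r)%N by lia.
have -> : qX ^+ (u + r).+2 = qX ^+ u.+1 * qX ^+ r.+1 by rewrite -exprD addSn addnS.
rewrite q2u.
have -> : qX ^+ u.+1 = qX ^+ r.+1 * qX ^+ (u - r) by rewrite -exprD addSn subnKC.
ring.
Qed.

Definition ballot_closed s t r : {fraction {poly int}} :=
  if (t < s)%N then qtri r * qbinom (s + t) (s + r)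
  else if s == t then qtri r * qbinom (s + t).-1 (s + r) else 0.

Lemma ballot_closed_lt s t r : (t < s)%N -> ballot_closed s t r = qtri r * qbinom (s + t) (s + r).
Proof. by rewrite /ballot_closed => ->. Qed.

Lemma ballot_closed_diag s r : ballot_closed s s r = qtri r * qbinom (s + s).-1 (s + r).
Proof. by rewrite /ballot_closed ltnn eqxx. Qed.

Lemma ballot_closed_gt s t r : (s < t)%N -> ballot_closed s t r = 0.
Proof. by move=> lt_st; rewrite /ballot_closed ltnNge (ltnW lt_st) ltn_eqF. Qed.

Lemma ballot_closed_nil r : ballot_closed 0 0 r = (r == 0)%:R.
Proof. by rewrite ballot_closed_diag qbinom_addn; case: r => [|r]; rewrite ?mulr0 // mulr1. Qed.

Lemma ballot_closedS0 s r : ballot_closed s.+1 0 r = ballot_closed s 0 r.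
Proof.
rewrite ballot_closed_lt // addn0 qbinom_addn.
by case: s => [|s]; rewrite ?ballot_closed_diag ?ballot_closed_lt // addn0 qbinom_addn.
Qed.

Lemma ballot_closedS s t r :
  ballot_closed s.+1 t.+1 r =
  ballot_closed s t.+1 r + (qX ^+ (s + t).+1 - 1) * (if (t < s)%N then ballot_closed s t r else 0) +
  (if s == t.+1 then qX ^+ s * (if (t < s)%N then ballot_closed s t r.-1 else 0) else 0) +
  (if (t < s.+1)%N then ballot_closed s.+1 t r else 0).
Proof.
case: (ltngtP t s) => [lt_ts | lt_st | <-].
- have lt_tS : (t < s.+1)%N := ltnW lt_ts.
  rewrite lt_tS.
  case: (ltngtP t.+1 s) => [lt_t1s | | <-].
  + rewrite addr0 !ballot_closed_lt // !addSn !addnS.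
    rewrite -qbinom_ballot_step; ring.
  + by rewrite ltnS leqNgt lt_ts.
  + rewrite ballot_closed_diag !ballot_closed_lt // !addSn !addnS /=.
    rewrite -qbinom_return_step; ring.
- have lt_sS : (s < t.+1)%N := ltnW lt_st.
  by rewrite !mulr0 if_same ltnNge lt_st /= !ballot_closed_gt // !addr0.
- rewrite ballot_closed_diag ballot_closed_gt // leqnn ballot_closed_lt //.
  by rewrite !mulr0 if_same !add0r addnS.
Qed.

Lemma ballot_sumE s t r : ballot_sum (s + t) s t r = ballot_closed s t r.
Proof.
elim: s t r => [|s IHs] t r.
  case: t => [|t]; first by rewrite ballot_sum_nil ballot_closed_nil.
  by rewrite ballot_sum_gt // ballot_closed_gt.
elim: t r => [|t IHt] r.
  by rewrite addSn ballot_sumS !down_sum0 !mulr0 if_same !addr0 IHs ballot_closedS0.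
by rewrite addSn ballot_sumS IHs !addnS !down_sumS !IHs -addSn IHt ballot_closedS.
Qed.

Theorem lemma2p3 (s r : nat) : (0 < s)%N ->
  \sum_(p : (2 * s).-tuple bool | ballot s s p)
     \sum_(M : {set 'I_(2 * s)} | (M \subset returns p) && (r <= #|M|)%N)
        qX ^ vmr p M
  = qX ^+ 'C(r.+1, 2) * qbinom (2 * s - 1) (s + r).
Proof.
move=> _; under eq_bigr => p _ do rewrite sum_marked_returns.
by rewrite mul2n -addnn -/(ballot_sum (s + s) s s r) ballot_sumE ballot_closed_diag subn1.
Qed.
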